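(* Let $(X,\tau)$ be a $\sigma$-compact Hausdorff space. The following are equivalent: (1) $X$ has the property $\textsf{S}_1(\mathcal{O},\mathcal{O})$; (2) TWO has a winning strategy in the game ${\sf G}_1(\mathcal{O},\mathcal{O})$.
   Context: $\sigma$-compact: a countable union of compact subsets. $\mathcal{O}$: open covers of $X$. $\textsf{S}_1(\mathcal{O},\mathcal{O})$: for every sequence $(\mathcal{U}_n)$ of open covers there are $U_n\in\mathcal{U}_n$ with $\{U_n:n\in\mathbb{N}\}$ covering $X$. Game ${\sf G}_1(\mathcal{O},\mathcal{O})$: in inning $n\in\mathbb{N}$ ONE chooses an open cover $O_n$ of $X$, TWO responds with $T_n\in O_n$; TWO wins if $\{T_n:n\in\mathbb{N}\}$ covers $X$, otherwise ONE wins. *)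

From HB Require Import structures.
From mathcomp Require Import all_boot all_order.
From mathcomp Require Import all_classical all_reals topology.
Set Implicit Arguments. Unset Strict Implicit. Unset Printing Implicit Defensive.
Local Open Scope classical_set_scope.

Definition open_cover (T : topologicalType) (U : set (set T)) : Prop :=
  (forall V, U V -> open V) /\ \bigcup_(V in U) V = setT.

Definition sigma_compact (T : topologicalType) : Prop :=
  exists K : nat -> set T, (forall n, compact (K n)) /\ \bigcup_n K n = setT.

Definition S1_OO (T : topologicalType) : Prop :=
  forall Us : nat -> set (set T), (forall n, open_cover (Us n)) ->
    exists V : nat -> set T, (forall n, Us n (V n)) /\ \bigcup_n V n = setT.

(* A strategy for TWO in G_1(O,O): given the list [:: O_0; ...; O_n] of
   ONE's moves so far, TWO answers with a set.  (TWO's own earlier moves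
   are determined by ONE's moves, so no generality is lost.) *)
Definition TWO_strategy (T : topologicalType) := seq (set (set T)) -> set T.

Definition TWO_winning (T : topologicalType) (sigma : TWO_strategy T) : Prop :=
  forall O : nat -> set (set T), (forall n, open_cover (O n)) ->
    (forall n, O n (sigma (mkseq O n.+1))) /\
    \bigcup_n sigma (mkseq O n.+1) = setT.

Definition TWO_has_winning_strategy (T : topologicalType) : Prop :=
  exists sigma : TWO_strategy T, TWO_winning sigma.

From HB Require Import structures.
From mathcomp Require Import all_boot all_order.
From mathcomp Require Import all_classical all_reals topology.
Set Implicit Arguments. Unset Strict Implicit. Unset Printing Implicit Defensive.
Local Open Scope classical_set_scope.

(* Call F finitely coverable when F is empty, or some point x has the property
   that F \ U is finitely coverable for every open U containing x: TWO then
   covers F in finitely many innings by answering each cover with a member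
   containing x.  If a compact F is not finitely coverable, take x such that
   F meets every neighbourhood W of x in a set that is not finitely coverable,
   an open U containing x with F \ U not finitely coverable, and W whose
   closure misses the compact set F \ U: then F \ U and F ∩ closure W are
   disjoint compact subsets of F that are not finitely coverable.  Iterating
   gives a binary tree of nonempty compact sets with disjoint children.  At
   stage n cover X by the complements of the unions of the siblings along the
   paths of length n + 1; any selection is defeated by a point on the branch
   that leaves the selected path at depth n + 1, so S_1(O,O) fails.  Hence
   under S_1(O,O) every K_m of a sigma-compact X is finitely coverable, and TWO
   wins by covering K_0, K_1, ... in turn. *)

Section finitely_coverable.
Variable T : topologicalType.

Inductive cover_tree : set T -> Type :=
| cover_tree0 : cover_tree set0
| cover_tree_node (F : set T) (x : T) :
    (forall U : set T, open U -> U x -> cover_tree (F `\` U)) -> cover_tree F.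

Definition finitely_coverable (F : set T) : Prop := inhabited (cover_tree F).

Lemma finitely_coverable0 : finitely_coverable set0.
Proof. exact: inhabits cover_tree0. Qed.

Lemma finitely_coverableS (F G : set T) :
  G `<=` F -> finitely_coverable F -> finitely_coverable G.
Proof.
move=> GF [t]; elim: t G GF => [|{}F x h IH] G GF.
  by move: GF; rewrite subset0 => ->; exact: finitely_coverable0.
constructor; apply: (@cover_tree_node G x) => U oU Ux.
by apply: inhabited_witness; apply: (IH U oU Ux); exact: setSD.
Qed.

Lemma finitely_coverableU (A B : set T) :
  finitely_coverable A -> finitely_coverable B -> finitely_coverable (A `|` B).
Proof.
move=> [t]; elim: t B => [|{}A x h IH] B fcB; first by rewrite set0U.
constructor; apply: (@cover_tree_node _ x) => U oU Ux.
rewrite setDUl; apply: inhabited_witness; apply: IH => //.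
exact: finitely_coverableS (@subDsetl _ _ _) fcB.
Qed.

Lemma not_finitely_coverable_neq0 (F : set T) :
  ~ finitely_coverable F -> F !=set0.
Proof.
move=> nfcF; apply/set0P/eqP => F0; apply: nfcF.
by rewrite F0; exact: finitely_coverable0.
Qed.

Lemma not_finitely_coverable_open (F : set T) (x : T) :
  ~ finitely_coverable F ->
  exists U, [/\ open U, U x & ~ finitely_coverable (F `\` U)].
Proof.
move=> nfcF; apply: contrapT => noU; apply: nfcF; constructor.
apply: (@cover_tree_node _ x) => U oU Ux; apply: inhabited_witness.
by apply: contrapT => nfcFU; apply: noU; exists U.
Qed.

Lemma not_finitely_coverable_cluster (F : set T) :
  compact F -> ~ finitely_coverable F ->
  exists2 x, F x & forall W, nbhs x W -> ~ finitely_coverable (F `&` W).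
Proof.
move=> cF nfcF.
pose Phi := [set A : set T | exists2 G, finitely_coverable G & F `\` G `<=` A].
have Phi_filter : ProperFilter Phi.
  apply: Build_ProperFilter_ex; last first.
    split; first by exists set0; [exact: finitely_coverable0|].
      move=> A B [G1 fc1 s1] [G2 fc2 s2]; exists (G1 `|` G2).
        exact: finitely_coverableU.
      by move=> y [Fy nG12]; split; [apply: s1|apply: s2]; split=> // ?;
        apply: nG12; [left|right].
    by move=> A B AB [G fcG sA]; exists G => //; exact: subset_trans AB.
  move=> A [G fcG sA]; apply: contrapT => nA; apply: nfcF.
  apply: finitely_coverableS fcG => y Fy; apply: contrapT => nGy.
  by apply: nA; exists y; exact: sA.
have [x [Fx clx]] : exists x, F x /\ cluster Phi x.
  by apply: cF; exists set0; [exact: finitely_coverable0|move=> y []].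
exists x => // W Wx fcFW.
have [y [[Fy nFWy] Wy]] : (F `\` (F `&` W)) `&` W !=set0.
  by apply: clx => //; exists (F `&` W).
exact: nFWy.
Qed.

End finitely_coverable.

Arguments cover_tree0 {T}.

Lemma closure_nbhs_disjoint_compact (T : topologicalType) (A : set T) (x : T) :
  hausdorff_space T -> compact A -> ~ A x ->
  exists2 W, nbhs x W & closure W `&` A = set0.
Proof.
move=> hT cA nAx; apply: contrapT => noW.
pose Phi := filter_from (nbhs x) (fun W => A `&` closure W).
have Phi_filter : ProperFilter Phi.
  apply: filter_from_proper; last first.
    move=> W xW; apply/set0P/eqP => AW0; apply: noW.
    by exists W; rewrite // setIC.
  apply: filter_from_filter; first by exists setT; exact: filterT.
  move=> W1 W2 xW1 xW2; exists (W1 `&` W2); first exact: filterI.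
  by move=> y [Ay /closureI[]]; do 2 split.
have [a [Aa cla]] : exists a, A a /\ cluster Phi a.
  by apply: cA; exists setT; [exact: filterT|move=> y []].
suff xa : x = a by apply: nAx; rewrite xa.
apply: hT => W V xW aV; rewrite nbhsE in aV; case: aV => V0 [oV0 V0a] V0V.
have [z [[_ zW] V0z]] : (A `&` closure W) `&` V0 !=set0.
  by apply: cla; [exists W|exact: open_nbhs_nbhs].
have [w [Ww V0w]] := zW V0 (open_nbhs_nbhs (conj oV0 V0z)).
by exists w; split => //; exact: V0V.
Qed.

Lemma not_finitely_coverable_split (T : topologicalType) (F : set T) :
  hausdorff_space T -> compact F -> ~ finitely_coverable F ->
  exists A B, [/\ compact A /\ ~ finitely_coverable A,
                  compact B /\ ~ finitely_coverable B,
                  A `<=` F, B `<=` F & A `&` B = set0].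
Proof.
move=> hT cF nfcF.
have [x Fx nfcFW] := not_finitely_coverable_cluster cF nfcF.
have [U [oU Ux nfcFU]] := not_finitely_coverable_open x nfcF.
have cFU : compact (F `\` U) by apply: compact_closedI cF _; exact: open_closedC.
have [W xW WFU] := closure_nbhs_disjoint_compact hT cFU (fun FUx => FUx.2 Ux).
exists (F `\` U), (F `&` closure W); split.
- by split.
- split; first exact: compact_closedI cF (@closed_closure _ W).
  move=> fcFW; apply: (nfcFW W xW); apply: finitely_coverableS fcFW.
  by apply: setIS; exact: subset_closure.
- exact: subDsetl.
- exact: subIsetl.
- by rewrite -subset0 -WFU => y [FUy [_ Wy]].
Qed.

Lemma splitting_tree (X : Type) (P : set X -> Prop) (K : set X) :
  (forall F, P F ->
     exists A B, [/\ P A, P B, A `<=` F, B `<=` F & A `&` B = set0]) ->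
  P K -> exists C : seq bool -> set X,
    [/\ forall s, P (C s), forall b s, C (b :: s) `<=` C s &
        forall s, C (true :: s) `&` C (false :: s) = set0].
Proof.
move=> splitP PK.
have /choice[sp spP] : forall F, exists AB : set X * set X, P F ->
    [/\ P AB.1, P AB.2, AB.1 `<=` F, AB.2 `<=` F & AB.1 `&` AB.2 = set0].
  move=> F; have [PF|nPF] := pselect (P F); last by exists (set0, set0) => /nPF.
  by have [A [B ?]] := splitP F PF; exists (A, B).
pose fix C s := if s is b :: s' then
  (if b then (sp (C s')).1 else (sp (C s')).2) else K.
have CP s : P (C s) by elim: s => [|[] s IH] //=; case: (spP _ IH).
by exists C; split => // [[] s|s] /=; case: (spP _ (CP s)).
Qed.

Lemma nested_compact_bigcap_neq0 (T : topologicalType) (C : nat -> set T) :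
  hausdorff_space T -> (forall n, compact (C n)) -> (forall n, C n !=set0) ->
  (forall n, C n.+1 `<=` C n) -> \bigcap_n C n !=set0.
Proof.
move=> hT cC C_neq0 CS.
have CW i j : (i <= j)%N -> C j `<=` C i.
  move=> /subnK <-; elim: (j - i)%N => // k IH.
  by rewrite addSn; exact: subset_trans (CS _) IH.
pose Phi := filter_from [set: nat] C.
have Phi_filter : ProperFilter Phi.
  apply: filter_from_proper => //; apply: filter_from_filter; first by exists 0%N.
  move=> i j _ _; exists (maxn i j) => // y Cy.
  by split; apply: (CW _ (maxn i j)) => //; rewrite ?leq_maxl ?leq_maxr.
have [y [_ cly]] : exists y, C 0%N y /\ cluster Phi y by apply: cC; exists 0%N.
exists y => n _; apply: (compact_closed hT (cC n)) => B yB.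
by apply: cly => //; exists n.
Qed.

Section cantor_scheme.
Variables (T : topologicalType) (C : seq bool -> set T).
Hypotheses (hT : hausdorff_space T) (C_compact : forall s, compact (C s))
  (C_neq0 : forall s, C s !=set0) (C_sub : forall b s, C (b :: s) `<=` C s)
  (C_disj : forall s, C (true :: s) `&` C (false :: s) = set0).

Fixpoint siblings (s : seq bool) : set T :=
  if s is b :: s' then siblings s' `|` C (~~ b :: s') else set0.

Lemma siblings_closed s : closed (siblings s).
Proof.
elim: s => [|b s IH] /=; first exact: closed0.
exact: (closedU IH (compact_closed hT (@C_compact (~~ b :: s)))).
Qed.

Lemma sub_siblings s t : size s = size t -> s <> t -> C t `<=` siblings s.
Proof.
elim: s t => [|a s IH] [|c t] //= [st] neq.
have [est|nst] := pselect (s = t); last by move=> y /C_sub /(IH t st nst); left.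
subst t; suff -> : c = ~~ a by move=> y; right.
by case: a c neq => [] [] // /(_ erefl).
Qed.

Lemma not_siblings n y : exists2 s, size s = n & ~ siblings s y.
Proof.
elim: n => [|n [s <- nsy]]; first by exists [::].
have [Cy|nCy] := pselect (C (true :: s) y).
  exists (true :: s) => // -[//|/= Cfy].
  by have : (C (true :: s) `&` C (false :: s)) y by []; rewrite C_disj.
by exists (false :: s) => // -[].
Qed.

Lemma cantor_scheme_not_S1_OO : ~ S1_OO T.
Proof.
move=> S1.
pose Us n := [set ~` siblings s | s in [set s | size s = n.+1]].
have Us_cover n : open_cover (Us n).
  split; first by move=> _ [s _ <-]; rewrite openC; exact: siblings_closed.
  apply/seteqP; split => // y _; have [s sn nsy] := not_siblings n.+1 y.
  by exists (~` siblings s) => //; exists s.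
have [V [UsV V_cover]] := S1 Us Us_cover.
have /choice[sel selP] : forall n, exists s, size s = n.+1 /\ ~` siblings s = V n.
  by move=> n; have [s ? ?] := UsV n; exists s.
pose fix branch n :=
  if n is n'.+1 then ~~ head true (sel n') :: branch n' else [::].
have size_branch n : size (branch n) = n by elim: n => //= n ->.
have [y branchy] : \bigcap_n C (branch n) !=set0.
  by apply: nested_compact_bigcap_neq0 => // n; apply: C_sub.
have [n _] : (\bigcup_n V n) y by rewrite V_cover.
have [sizen <-] := selP n; apply; apply: sub_siblings (branchy n.+1 I).
  by rewrite size_branch.
have -> : branch n.+1 = ~~ head true (sel n) :: branch n by [].
by case: (sel n) sizen => // -[] t _ [].
Qed.

End cantor_scheme.

Lemma S1_OO_finitely_coverable (T : topologicalType) (K : set T) :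
  hausdorff_space T -> S1_OO T -> compact K -> finitely_coverable K.
Proof.
move=> hT S1 cK; apply: contrapT => nfcK.
have [|C [CP C_sub C_disj]] := @splitting_tree _
  (fun F => compact F /\ ~ finitely_coverable F) K _ (conj cK nfcK).
  by move=> F [cF nfcF]; exact: not_finitely_coverable_split.
apply: (@cantor_scheme_not_S1_OO _ C hT) => // s; first exact: (CP s).1.
exact: not_finitely_coverable_neq0 (CP s).2.
Qed.

Lemma S1_OO_open_cover_neq0 (T : topologicalType) (O : set (set T)) :
  S1_OO T -> open_cover O -> O !=set0.
Proof.
by move=> S1 Ocov; have [V [OV _]] := S1 (fun=> O) (fun=> Ocov); exists (V 0%N).
Qed.

Section sequential_strategy.
Variables (T : topologicalType) (K : nat -> set T).
Variable tK : forall m, cover_tree (K m).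

(* In state (m, t), TWO is covering the set of the tree t and will turn to
   K m once t is exhausted. *)
Definition strategy_state := (nat * {F : set T & cover_tree F})%type.

Definition strategy_step (st : strategy_state) (O : set (set T)) :
    strategy_state * set T :=
  let: (m, existT _ t) := st in
  match t with
  | cover_tree0 => ((m.+1, existT _ (K m) (tK m)), xget set0 O)
  | cover_tree_node F x h =>
    if pselect (exists2 U, O U & open U /\ U x) is left ex then
      let: exist2 U _ oUx := cid2 ex in
      ((m, existT _ (F `\` U) (h U (proj1 oUx) (proj2 oUx))), U)
    else ((m, existT _ set0 cover_tree0), xget set0 O) (* O is not an open cover *)
  end.

Definition strategy_run (l : seq (set (set T))) : strategy_state * set T :=
  foldl (fun sa O => strategy_step sa.1 O)
    ((0%N, existT _ set0 cover_tree0), set0) l.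

Definition sequential_strategy : TWO_strategy T := fun l => (strategy_run l).2.

Lemma strategy_step_legal st O : O !=set0 -> O (strategy_step st O).2.
Proof.
case: st => m [F t] O0; case: t => [|{}F x h] /=; first exact: xgetPex.
by case: pselect => [ex|_] /=; [case: (cid2 ex)|exact: xgetPex].
Qed.

Section play.
Variable O : nat -> set (set T).
Hypothesis O_cover : forall n, open_cover (O n).

Let st n := (strategy_run (mkseq O n)).1.
Let ans n := sequential_strategy (mkseq O n.+1).

Lemma strategy_runS n : strategy_step (st n) (O n) = (st n.+1, ans n).
Proof.
rewrite /st /ans /sequential_strategy /strategy_run mkseqS foldl_rcons.
by case: strategy_step.
Qed.

Lemma play_cover_tree F (t : cover_tree F) n m : st n = (m, existT _ F t) ->
  F `<=` \bigcup_k ans k /\ exists j, st j = (m.+1, existT _ (K m) (tK m)).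
Proof.
elim: t n => [|{}F x h IH] n stn; have := strategy_runS n; rewrite stn /=.
  by case=> stn1 _; split; [exact: sub0set|exists n.+1].
case: pselect => [ex|nex]; last first.
  have [U OU Ux] : (\bigcup_(U in O n) U) x by rewrite (O_cover n).2.
  by exfalso; apply: nex; exists U => //; split => //; exact: (O_cover n).1.
case: (cid2 ex) => U _ oUx [stn1 ansn].
have [FU_cover reach] := IH U (proj1 oUx) (proj2 oUx) n.+1 (esym stn1).
split => // y Fy; have [Uy|nUy] := pselect (U y); last exact: FU_cover.
by exists n; rewrite // -ansn.
Qed.

Lemma strategy_reaches m : exists n, st n = (m.+1, existT _ (K m) (tK m)).
Proof.
elim: m => [|m [n stn]]; first by exists 1%N.
by have [_ [j stj]] := play_cover_tree stn; exists j.
Qed.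

Lemma sequential_strategy_legal n : O n !=set0 -> O n (ans n).
Proof.
by move=> On0; have := strategy_step_legal (st n) On0; rewrite strategy_runS.
Qed.

Lemma sequential_strategy_covers :
  \bigcup_m K m = setT -> \bigcup_n ans n = setT.
Proof.
move=> K_cover; apply/seteqP; split => // y _.
have [m _ Kmy] : (\bigcup_m K m) y by rewrite K_cover.
have [n stn] := strategy_reaches m.
exact: (play_cover_tree stn).1.
Qed.

End play.

Lemma sequential_strategy_winning :
  \bigcup_m K m = setT -> (forall O : set (set T), open_cover O -> O !=set0) ->
  TWO_winning sequential_strategy.
Proof.
move=> K_cover cover_neq0 O O_cover.
split; last exact: sequential_strategy_covers.
by move=> n; apply: sequential_strategy_legal; exact: cover_neq0.
Qed.

End sequential_strategy.

Lemma winning_strategy_S1_OO (T : topologicalType) :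
  TWO_has_winning_strategy T -> S1_OO T.
Proof.
move=> [sigma win] Us Us_cover; have [legal cover] := win Us Us_cover.
by exists (fun n => sigma (mkseq Us n.+1)).
Qed.

Unset Implicit Arguments.

Theorem theorem8p5 (T : topologicalType) :
  hausdorff_space T -> sigma_compact T ->
  (S1_OO T <-> TWO_has_winning_strategy T).
Proof.
move=> hT [K [cK K_cover]]; split; last exact: winning_strategy_S1_OO.
move=> S1.
pose tK m := inhabited_witness (S1_OO_finitely_coverable hT S1 (cK m)).
exists (sequential_strategy tK); apply: sequential_strategy_winning K_cover _.
by move=> O; exact: S1_OO_open_cover_neq0.
Qed.
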